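(* Let $(X,\|\cdot\|)$ be an extended Banach space and let $\tau_F$ be its finest locally convex topology. Then $(X,\tau_F)$ is a Mackey space, i.e. $\tau_F$ coincides with the Mackey topology of $(X,\tau_F)$.
   Context: An extended norm on a vector space $X$ over $\mathbb{R}$ or $\mathbb{C}$ is a map $\|\cdot\|:X\to[0,\infty]$ with $\|x\|=0$ iff $x=0_X$, $\|\alpha x\|=|\alpha|\|x\|$, and $\|x+y\|\le\|x\|+\|y\|$; $X$ carries the topology with basic neighborhoods $\{y:\|y-x\|<\varepsilon\}$. $(X,\|\cdot\|)$ is an extended Banach space if every Cauchy sequence converges. A locally convex topology on $X$ is one induced by a family of finite-valued seminorms. The finest locally convex topology $\tau_F$ is the locally convex topology coarser than the extended norm topology such that every locally convex topology coarser than the extended norm topology is coarser than $\tau_F$. The Mackey topology of a locally convex space $(X,\sigma)$ is the topology of uniform convergence on absolutely convex weak$^*$-compact subsets of $(X,\sigma)^*$; it is the finest locally convex topology on $X$ having the same continuous linear functionals as $\sigma$. *)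

From HB Require Import structures.
From mathcomp Require Import all_boot all_order all_algebra.
From mathcomp Require Import boolp classical_sets cardinality reals constructive_ereal.
From mathcomp Require Import complex.

Set Implicit Arguments.
Unset Strict Implicit.
Unset Printing Implicit Defensive.

Import Order.TTheory GRing.Theory Num.Theory.
Local Open Scope classical_set_scope.
Local Open Scope ring_scope.

(* Scalars: a ring K with an absolute value absK : K -> R (R a realType).
   Instantiated below with (K, absK) = (R, normr) and (R[i], normc). *)

Section Defs.
Variables (R : realType) (K : pzRingType) (absK : K -> R) (X : lmodType K).

Definition is_ext_norm (N : X -> \bar R) : Prop :=
  [/\ forall x, (0 <= N x)%E,
      forall x, N x = 0%E <-> x = 0,
      forall (a : K) x, N (a *: x)%R = ((absK a)%:E * N x)%E
    & forall x y, (N (x + y)%R <= N x + N y)%E].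

Definition ext_cauchy (N : X -> \bar R) (u : nat -> X) : Prop :=
  forall eps : R, 0 < eps -> exists M : nat,
    forall m n, (M <= m)%N -> (M <= n)%N -> (N (u m - u n)%R < eps%:E)%E.

Definition ext_converges (N : X -> \bar R) (u : nat -> X) (x : X) : Prop :=
  forall eps : R, 0 < eps -> exists M : nat,
    forall n, (M <= n)%N -> (N (u n - x)%R < eps%:E)%E.

Definition is_ext_banach (N : X -> \bar R) : Prop :=
  is_ext_norm N /\
  forall u, ext_cauchy N u -> exists x, ext_converges N u x.

Definition ext_norm_open (N : X -> \bar R) : set (set X) :=
  [set U | forall x, U x -> exists2 eps : R, 0 < eps &
     [set y | (N (y - x)%R < eps%:E)%E] `<=` U].

Definition is_seminorm (p : X -> R) : Prop :=
  [/\ forall x, 0 <= p x,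
      forall (a : K) x, p (a *: x) = absK a * p x
    & forall x y, p (x + y) <= p x + p y].

Definition lc_open (P : set (X -> R)) : set (set X) :=
  [set U | forall x, U x -> exists F : set (X -> R),
     [/\ finite_set F, F `<=` P &
       exists2 eps : R, 0 < eps &
         [set y | forall p, F p -> p (y - x) < eps] `<=` U]].

Definition seminorm_family (P : set (X -> R)) : Prop :=
  forall p, P p -> is_seminorm p.

Definition nbhd_of (O : set (set X)) (x : X) (V : set X) : Prop :=
  exists U, [/\ O U, U x & U `<=` V].

Definition is_linear_functional (f : X -> K) : Prop :=
  forall (a : K) x y, f (a *: x + y) = a * f x + f y.

Definition cont_functional (O : set (set X)) (f : X -> K) : Prop :=
  forall x (eps : R), 0 < eps ->
    nbhd_of O x [set y | absK (f y - f x) < eps].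

Definition dual (O : set (set X)) : set (X -> K) :=
  [set f | is_linear_functional f /\ cont_functional O f].

Definition weak_star_open : set (set (X -> K)) :=
  [set U | forall f, U f -> exists F : set X,
     finite_set F /\ exists2 eps : R, 0 < eps &
       [set g | forall x, F x -> absK (g x - f x) < eps] `<=` U].

Definition compact_in (T : Type) (O : set (set T)) (A : set T) : Prop :=
  forall C : set (set T), C `<=` O -> A `<=` \bigcup_(V in C) V ->
    exists C' : set (set T),
      [/\ finite_set C', C' `<=` C & A `<=` \bigcup_(V in C') V].

Definition absolutely_convex (A : set (X -> K)) : Prop :=
  forall f g (a b : K), A f -> A g -> absK a + absK b <= 1 ->
    A (fun x => a * f x + b * g x).

(* Sets on which the Mackey topology of (X, O) is uniform convergence. *)
Definition mackey_sets (O : set (set X)) : set (set (X -> K)) :=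
  [set A | [/\ A `<=` dual O, absolutely_convex A & compact_in weak_star_open A]].

Definition unif_seminorm (A : set (X -> K)) (x : X) : R :=
  sup [set absK (f x) | f in A].

Definition mackey_open (O : set (set X)) : set (set X) :=
  lc_open [set p | exists2 A, mackey_sets O A & p = unif_seminorm A].

(* The finest locally convex topology coarser than the extended norm topology,
   given as the topology induced by a family P of seminorms. *)
Definition is_finest_lc (N : X -> \bar R) (P : set (X -> R)) : Prop :=
  [/\ seminorm_family P,
      lc_open P `<=` ext_norm_open N &
      forall Q, seminorm_family Q -> lc_open Q `<=` ext_norm_open N ->
        lc_open Q `<=` lc_open P].

End Defs.

Definition normC (R : realType) (z : complex.complex R) : R := @ComplexField.Normc.normc R z.

(* The Mackey topology of (X, tau_F) is always finer than tau_F: a continuous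
   seminorm p is the supremum of |f| over its polar {f linear | |f| <= p}, which
   is absolutely convex, weak*-compact (Alaoglu, via Tychonoff) and attains p
   pointwise (Hahn-Banach; over C through the complexification of a real
   functional).
   Conversely, by maximality of tau_F it suffices that every Mackey seminorm is
   continuous for the extended norm.  A weak*-compact set A of tau_F-continuous
   functionals is pointwise bounded, and completeness makes it bounded on a
   ball: otherwise there are nested balls B(x_(n+1), 2 r_(n+1)) in B(x_n, r_n)
   on which some f_n in A exceeds n, and the limit of the centres contradicts
   pointwise boundedness.  Rescaling that ball makes sup_(f in A) |f| small
   near 0. *)

From HB Require Import structures.
From mathcomp Require Import all_boot all_order all_algebra.
From mathcomp Require Import boolp classical_sets cardinality reals constructive_ereal.
From mathcomp Require Import complex.
From mathcomp Require Import finmap.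
From mathcomp Require Import ring lra.
From mathcomp Require Import topology normedtype.
Import Order.TTheory GRing.Theory Num.Theory.
Import numFieldNormedType.Exports.
Set Implicit Arguments.
Unset Strict Implicit.
Unset Printing Implicit Defensive.
Local Open Scope ring_scope.
Local Open Scope classical_set_scope.

Section RealSup.
Variable R : realType.
Implicit Types (S : set R) (b c : R).

Lemma sup_le_ub S b : 0 <= b -> ubound S b -> sup S <= b.
Proof.
move=> b_ge0 Sb; have [->|/set0P[s Ss]] := eqVneq S set0; first by rewrite sup0.
by apply: ge_sup => //; exists s.
Qed.

Lemma sup_ge0 S : has_ubound S -> (forall s, S s -> 0 <= s) -> 0 <= sup S.
Proof.
move=> ubS S_ge0; have [->|/set0P[s Ss]] := eqVneq S set0; first by rewrite sup0.
exact: le_trans (S_ge0 s Ss) (ub_le_sup ubS Ss).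
Qed.

Lemma sup_image_pmull (T : Type) (A : set T) (g : T -> R) c :
  0 <= c -> has_ubound (g @` A) -> sup [set c * g t | t in A] = c * sup (g @` A).
Proof.
move=> c_ge0 [M gM].
have cgM : ubound [set c * g t | t in A] (c * M).
  by move=> _ [t At <-]; rewrite ler_wpM2l // gM //; exists t.
have [->|/set0P[t0 At0]] := eqVneq A set0; first by rewrite !image_set0 sup0 mulr0.
have [->|c_neq0] := eqVneq c 0.
  suff -> : [set 0 * g t | t in A] = [set 0] by rewrite sup1 mul0r.
  apply/seteqP; split=> [_ [t _ <-]|_ ->]; first by rewrite mul0r.
  by exists t0; rewrite ?mul0r.
have c_gt0 : 0 < c by rewrite lt_def c_neq0.
apply/eqP; rewrite eq_le; apply/andP; split.
  apply: ge_sup; first by exists (c * g t0), t0.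
  move=> _ [t At <-]; rewrite ler_wpM2l //.
  by apply: ub_le_sup; [exists M | exists t].
rewrite -ler_pdivlMl //; apply: ge_sup; first by exists (g t0), t0.
move=> _ [t At <-]; rewrite ler_pdivlMl //.
by apply: ub_le_sup; [exists (c * M) | exists t].
Qed.

End RealSup.

Lemma filter_forall_finite (T : choiceType) (U : Type) (G : set_system U)
    (F : set T) (P : T -> set U) :
  Filter G -> finite_set F -> (forall t, F t -> G (P t)) ->
  G [set u | forall t, F t -> P t u].
Proof.
move=> G_filter finF GP.
apply: filterS (@filter_bigI U T (fset_set F) P G G_filter _) => [u FPu t Ft|t].
  by apply: FPu; rewrite /= in_fset_set // in_setE.
by rewrite in_fset_set // in_setE => /GP.
Qed.

Section LinearFunctional.
Variables (K : pzRingType) (X : lmodType K) (f : X -> K).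
Hypothesis f_lin : is_linear_functional f.

Lemma lfun0 : f 0 = 0.
Proof.
have := f_lin 1 0 0; rewrite scaler0 addr0 mul1r.
by move/(congr1 (fun z => z - f 0)); rewrite subrr addrK.
Qed.

Lemma lfunD x y : f (x + y) = f x + f y.
Proof. by have := f_lin 1 x y; rewrite scale1r mul1r. Qed.

Lemma lfunZ a x : f (a *: x) = a * f x.
Proof. by have := f_lin a x 0; rewrite addr0 lfun0 addr0. Qed.

Lemma lfunN x : f (- x) = - f x.
Proof. by rewrite -scaleN1r lfunZ mulN1r. Qed.

Lemma lfunB x y : f (x - y) = f x - f y.
Proof. by rewrite lfunD lfunN. Qed.

End LinearFunctional.

Section AbsoluteValue.
Variables (R : realType) (K : fieldType) (absK : K -> R).
Hypotheses (absK_ge0 : forall a, 0 <= absK a) (absK0 : absK 0 = 0) (absK1 : absK 1 = 1)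
  (absKM : forall a b, absK (a * b) = absK a * absK b)
  (absKD : forall a b, absK (a + b) <= absK a + absK b)
  (absK_onto : forall r : R, 0 <= r -> exists c : K, absK c = r).

Lemma absKN1 : absK (-1) = 1.
Proof.
have /eqP := absKM (-1) (-1); rewrite mulrNN mulr1 absK1 eq_sym -expr2 sqrf_eq1.
by case/orP=> /eqP // absKN1; have := absK_ge0 (-1); rewrite absKN1 ler0N1.
Qed.

Lemma absKN a : absK (- a) = absK a.
Proof. by rewrite -mulN1r absKM absKN1 mul1r. Qed.

Lemma absK_distC a b : absK (a - b) = absK (b - a).
Proof. by rewrite -absKN opprB. Qed.

Lemma lerB_absK_dist a b : absK a - absK b <= absK (a - b).
Proof. by rewrite lerBlDr; apply: le_trans (absKD _ _); rewrite subrK. Qed.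

Lemma absKV a : a != 0 -> absK a^-1 = (absK a)^-1.
Proof.
move=> a_neq0; have absKVa : absK a^-1 * absK a = 1 by rewrite -absKM mulVf.
have absKa_neq0 : absK a != 0.
  by apply: contra_eq_neq absKVa => ->; rewrite mulr0 eq_sym oner_neq0.
by apply: (mulIf absKa_neq0); rewrite absKVa mulVf.
Qed.

Section ExtendedNorm.
Variables (X : lmodType K) (N : X -> \bar R).
Hypothesis N_norm : is_ext_norm absK N.

Lemma enorm_ge0 x : (0 <= N x)%E. Proof. by case: N_norm. Qed.
Lemma enorm0 : N 0 = 0%E. Proof. by case: N_norm => _ N0 _ _; apply/N0. Qed.
Lemma enormZ a x : N (a *: x) = ((absK a)%:E * N x)%E. Proof. by case: N_norm. Qed.
Lemma enormD x y : (N (x + y) <= N x + N y)%E. Proof. by case: N_norm. Qed.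

Lemma enormN x : N (- x) = N x.
Proof. by rewrite -scaleN1r enormZ absKN1 mul1e. Qed.

Lemma enorm_distC x y : N (x - y) = N (y - x).
Proof. by rewrite -enormN opprB. Qed.

Lemma enorm_dist_lt_trans x y z (r s : R) :
  (N (x - y) < r%:E)%E -> (N (y - z) < s%:E)%E -> (N (x - z) < (r + s)%:E)%E.
Proof.
move=> xy yz; have -> : x - z = (x - y) + (y - z) by rewrite addrA subrK.
by apply: le_lt_trans (enormD _ _) _; rewrite EFinD lteD.
Qed.

End ExtendedNorm.

Section UniformBoundedness.
Variables (X : lmodType K) (N : X -> \bar R).
Hypothesis N_banach : is_ext_banach absK N.
Let N_norm : is_ext_norm absK N := N_banach.1.

Lemma ext_banach_nested_balls (x : nat -> X) (r : nat -> R) :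
  (forall n, 0 < r n) -> (forall n, r n.+1 <= r n / 2) ->
  (forall n, r n <= n.+1%:R^-1) ->
  (forall n, (N (x n.+1 - x n) < (r n / 2)%:E)%E) ->
  exists z, forall n, (N (z - x n) < (2 * r n)%:E)%E.
Proof.
move=> r_gt0 r_half r_small x_step.
have x_near n d : (N (x (n + d)%N - x n) < (r n)%:E)%E.
  elim: d n => [|d IH] n; first by rewrite addn0 subrr enorm0 // lte_fin.
  rewrite -addSnnS.
  apply: lt_le_trans (enorm_dist_lt_trans N_norm (IH n.+1) (x_step n)) _.
  by rewrite lee_fin; have := r_half n; lra.
have x_cauchy : ext_cauchy N x.
  move=> eps eps_gt0; have [k _ k_large] := nbhs_infty_gtr (2 / eps).
  exists k => m n km kn.
  have xmk := x_near k (m - k)%N; rewrite subnKC // in xmk.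
  have xkn := x_near k (n - k)%N; rewrite subnKC // enorm_distC // in xkn.
  apply: lt_le_trans (enorm_dist_lt_trans N_norm xmk xkn) _; rewrite lee_fin.
  have : k.+1%:R^-1 < eps / 2.
    rewrite -[eps / 2]invrK invf_div ltf_pV2 ?posrE ?ltr0n ?divr_gt0 //.
    by apply: lt_trans (k_large k (leqnn k)) _; rewrite ltr_nat.
  by move=> kinv; have := le_lt_trans (r_small k) kinv; lra.
have [z xz] := N_banach.2 x x_cauchy.
exists z => n; have [M xMz] := xz _ (r_gt0 n).
have zM := xMz (maxn M n) (leq_maxl _ _); rewrite enorm_distC // in zM.
have Mn := x_near n (maxn M n - n)%N; rewrite subnKC ?leq_maxr // in Mn.
by apply: lt_le_trans (enorm_dist_lt_trans N_norm zM Mn) _; rewrite lee_fin; lra.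
Qed.

Lemma lfun_large_on_ball (f : X -> K) (x y : X) (d k : R) :
  is_linear_functional f ->
  (forall w, (N w < d%:E)%E -> absK (f w) < 1) ->
  k + absK (f x) + 1 < absK (f y) ->
  forall w, (N (w - (x + y)) < d%:E)%E -> k < absK (f w).
Proof.
move=> f_lin f_small fy_large w /f_small; rewrite lfunB // lfunD // => fw.
have fy := absKD (f x + f y) (- f x); rewrite absKN addrAC subrr add0r in fy.
have fxy := absKD (f x + f y - f w) (f w); rewrite subrK absK_distC in fxy.
lra.
Qed.

Variable A : set (X -> K).

Definition unbounded_on_ball (r : R) :=
  forall M, exists y, (N y < r%:E)%E /\ exists2 f, A f & M < absK (f y).

Definition large_subball (n : nat) (x : X) (r : R) (x' : X) (s : R) (f : X -> K) :=
  [/\ (N (x' - x) < (r / 2)%:E)%E, 0 < s, s <= r / 2, s <= n.+2%:R^-1 &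
      A f /\ forall w, (N (w - x') < (2 * s)%:E)%E -> n%:R < absK (f w)].

Hypothesis A_lin : forall f, A f -> is_linear_functional f.
Hypothesis A_cont : forall f, A f ->
  exists2 d : R, 0 < d & forall w, (N w < d%:E)%E -> absK (f w) < 1.
Hypothesis A_ptwise : forall x, exists M, forall f, A f -> absK (f x) <= M.

Lemma exists_large_subball n x r : 0 < r -> unbounded_on_ball (r / 2) ->
  exists x' s f, large_subball n x r x' s f.
Proof.
move=> r_gt0 A_unbounded; have [Mx Mx_bound] := A_ptwise x.
have [y [Ny [f Af fy_large]]] := A_unbounded (n%:R + Mx + 1).
have [d d_gt0 f_small] := A_cont Af.
have n2_gt0 : 0 < n.+2%:R^-1 :> R by rewrite invr_gt0 ltr0n.
pose s := Num.min (d / 2) (Num.min (r / 2) n.+2%:R^-1).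
have s_le : s <= d / 2 by rewrite ge_min lexx.
exists (x + y), s, f; split.
- by rewrite addrAC subrr add0r.
- by rewrite !lt_min !divr_gt0.
- by rewrite !ge_min lexx orbT.
- by rewrite !ge_min lexx !orbT.
split=> // w wxy; apply: (lfun_large_on_ball (x := x) (y := y) (A_lin Af) f_small).
  by have := Mx_bound f Af; lra.
by apply: lt_le_trans wxy _; rewrite lee_fin; lra.
Qed.

Theorem uniform_boundedness : exists2 d : R, 0 < d & exists M : R,
  forall y, (N y < d%:E)%E -> forall f, A f -> absK (f y) <= M.
Proof.
apply: contrapT => not_bounded.
have A_unbounded r : 0 < r -> unbounded_on_ball r.
  move=> r_gt0 M; apply: contrapT => no_y; apply: not_bounded.
  exists r => //; exists M => y Ny f Af; rewrite leNgt; apply/negP => fy.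
  by apply: no_y; exists y; split => //; exists f.
have step (nxr : nat * (X * R)) : exists xsf : X * R * (X -> K),
    0 < nxr.2.2 -> large_subball nxr.1 nxr.2.1 nxr.2.2 xsf.1.1 xsf.1.2 xsf.2.
  case: nxr => n [x r] /=; have [r_gt0|_] := ltP 0 r; last by exists (x, r, fun=> 0).
  have r2_gt0 : 0 < r / 2 by rewrite divr_gt0.
  have [x' [s [f sub]]] := exists_large_subball n x r_gt0 (A_unbounded _ r2_gt0).
  by exists (x', s, f).
have [next next_spec] := choice step.
pose fix balls n : X * R := if n is m.+1 then (next (m, balls m)).1 else (0, 1).
have r_gt0 n : 0 < (balls n).2.
  by elim: n => [|n IH] /=; [exact: ltr01 | case: (next_spec (n, balls n) IH)].
have spec n := next_spec (n, balls n) (r_gt0 n).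
have [z z_in_balls] : exists z, forall n,
    (N (z - (balls n).1) < (2 * (balls n).2)%:E)%E.
  apply: ext_banach_nested_balls => [//|n|[|n]|n]; try by case: (spec n).
  by rewrite /= invr1.
have [Mz Mz_bound] := A_ptwise z.
have [k _ k_large] := nbhs_infty_gtr Mz.
have [_ _ _ _ [Af f_large]] := spec k.
have := f_large z (z_in_balls k.+1); have := Mz_bound _ Af.
by have := k_large k (leqnn k); lra.
Qed.

End UniformBoundedness.

Section Duality.
Variable X : lmodType K.
Local Notation weak_star := (@weak_star_open R K absK X).

Definition polar (p : X -> R) : set (X -> K) :=
  [set f | is_linear_functional f /\ forall x, absK (f x) <= p x].

Definition hahn_banach_property :=
  forall p, is_seminorm absK p -> forall x, exists2 f, polar p f & p x <= absK (f x).

Definition alaoglu_property :=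
  forall p, is_seminorm absK p -> compact_in weak_star (polar p).

Lemma weak_star_compact_bounded (A : set (X -> K)) x :
  compact_in weak_star A -> exists M, forall f, A f -> absK (f x) <= M.
Proof.
move=> A_compact; pose V n := [set f : X -> K | absK (f x) < n%:R].
have V_open n : weak_star (V n).
  move=> f /= fx_lt; exists [set x]; split; first exact: finite_set1.
  exists (n%:R - absK (f x)); first by rewrite subr_gt0.
  move=> g /= /(_ x erefl) gf; rewrite /V /=.
  by have := lerB_absK_dist (g x) (f x); lra.
have A_cover : A `<=` \bigcup_(W in range V) W.
  move=> f Af; have [n _ n_large] := nbhs_infty_gtr (absK (f x)).
  by exists (V n); [exists n | apply: n_large => /=].
have V_range_open : range V `<=` weak_star by move=> _ [n _ <-].
have [C [finC CV AC]] := A_compact (range V) V_range_open A_cover.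
have : \forall M \near +oo, forall W, C W -> forall f, W f -> absK (f x) <= M.
  apply: filter_forall_finite => // _ /CV [n _ <-].
  by apply: filterS (nbhs_pinfty_ge (num_real n%:R)) => M nM f /ltW /le_trans; apply.
case/filter_ex => M CM; exists M => f /AC [W CW Wf]; exact: CM CW f Wf.
Qed.

Lemma seminorm0 (p : X -> R) : is_seminorm absK p -> p 0 = 0.
Proof. by case=> _ pZ _; rewrite -(scale0r (0 : X)) pZ absK0 mul0r. Qed.

Lemma unif_seminorm_is_seminorm (A : set (X -> K)) :
  (forall f, A f -> is_linear_functional f) ->
  (forall x, has_ubound [set absK (f x) | f in A]) ->
  is_seminorm absK (unif_seminorm absK A).
Proof.
move=> A_lin A_bnd; split.
- by move=> x; apply: sup_ge0 => // _ [f _ <-].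
- move=> a x; rewrite /unif_seminorm -sup_image_pmull //.
  by congr sup; apply: eq_imagel => f Af; rewrite lfunZ ?absKM //; exact: A_lin.
- move=> x y; apply: sup_le_ub.
    by apply: addr_ge0; apply: sup_ge0 => // _ [f _ <-].
  move=> _ [f Af <-]; rewrite lfunD; last exact: A_lin.
  apply: le_trans (absKD _ _) _.
  by apply: lerD; apply: ub_le_sup => //; exists f.
Qed.

Lemma polar_absolutely_convex p : is_seminorm absK p ->
  absolutely_convex absK (polar p).
Proof.
case=> p_ge0 _ _ f g a b [f_lin f_le] [g_lin g_le] ab_le1; split.
  by move=> c x y; rewrite f_lin g_lin; ring.
move=> x; apply: le_trans (absKD _ _) _; rewrite !absKM.
have := ler_wpM2l (absK_ge0 a) (f_le x); have := ler_wpM2l (absK_ge0 b) (g_le x).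
have := ler_wpM2r (p_ge0 x) ab_le1; rewrite mulrDl mul1r; lra.
Qed.

Lemma unif_seminorm_polar p : hahn_banach_property -> is_seminorm absK p ->
  unif_seminorm absK (polar p) = p.
Proof.
move=> hb p_semi; apply/funext => x; apply/eqP; rewrite eq_le; apply/andP; split.
  by apply: sup_le_ub => [|_ [f [_ f_le] <-]]; [case: p_semi | exact: f_le].
have [f pf pfx] := hb p p_semi x; apply: le_trans pfx _.
by apply: ub_le_sup; [exists (p x) => _ [g [_ g_le] <-] | exists f].
Qed.

Lemma polar_sub_dual (P : set (X -> R)) p : seminorm_family absK P -> P p ->
  polar p `<=` dual absK (lc_open P).
Proof.
move=> P_semi Pp f [f_lin f_le]; split => // x eps eps_gt0.
have p_semi := P_semi p Pp; case: (p_semi) => p_ge0 _ pD.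
exists [set y | p (y - x) < eps]; split.
- move=> y /= pyx; exists [set p]; split; [exact: finite_set1 | by move=> q -> |].
  exists (eps - p (y - x)); first by rewrite subr_gt0.
  move=> z /= /(_ p erefl) pzy; have := pD (z - y) (y - x); rewrite addrA subrK.
  lra.
- by rewrite /= subrr seminorm0.
- by move=> y /= pyx; rewrite -lfunB //; apply: le_lt_trans (f_le _) pyx.
Qed.

Lemma lc_open_sub_mackey_open (P : set (X -> R)) : seminorm_family absK P ->
  hahn_banach_property -> alaoglu_property ->
  lc_open P `<=` mackey_open absK (lc_open P).
Proof.
move=> P_semi hb al U U_open x Ux.
have [F [finF FP [eps eps_gt0 ballU]]] := U_open x Ux.
exists ((fun p => unif_seminorm absK (polar p)) @` F); split.
- exact: finite_image.
- move=> _ [p Fp <-]; have p_semi := P_semi p (FP p Fp).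
  exists (polar p) => //; split; [exact: polar_sub_dual (FP p Fp) |
    exact: polar_absolutely_convex | exact: al].
- exists eps => // y y_near; apply: ballU => p Fp.
  by rewrite -(unif_seminorm_polar hb (P_semi p (FP p Fp))); apply: y_near; exists p.
Qed.

Lemma dual_bounded_near0 (N : X -> \bar R) (O : set (set X)) f :
  O `<=` ext_norm_open N -> dual absK O f ->
  exists2 d : R, 0 < d & forall w, (N w < d%:E)%E -> absK (f w) < 1.
Proof.
move=> ON [f_lin f_cont]; have [U [OU U0 Uf]] := f_cont 0 1 ltr01.
have [d d_gt0 dU] := ON U OU 0 U0.
exists d => // w Nw; have /Uf : U w by apply: dU; rewrite /= subr0.
by rewrite /= lfun0 // subr0.
Qed.

Lemma lc_open_sub_ext_norm_open (N : X -> \bar R) (Q : set (X -> R)) :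
  (forall q, Q q -> forall eps, 0 < eps ->
     exists2 d : R, 0 < d & forall y, (N y < d%:E)%E -> q y < eps) ->
  lc_open Q `<=` ext_norm_open N.
Proof.
move=> Q_small U U_open x Ux; have [F [finF FQ [eps eps_gt0 ballU]]] := U_open x Ux.
have F_small : \forall d \near 0^'+,
    forall q, F q -> forall y, (N y < d%:E)%E -> q y < eps.
  apply: filter_forall_finite => // q /FQ /Q_small /(_ eps eps_gt0) [d d_gt0 qd].
  apply: filterS (nbhs_right_le d_gt0) => e ed y Ny; apply: qd.
  by apply: lt_le_trans Ny _; rewrite lee_fin.
have [d [d_gt0 Fd]] := filter_ex (filterI (nbhs_right_gt 0) F_small).
by exists d => // y Ny; apply: ballU => q Fq; apply: Fd.
Qed.

Lemma equibounded_unif_seminorm_small (N : X -> \bar R) (A : set (X -> K)) d M :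
  is_ext_norm absK N -> (forall f, A f -> is_linear_functional f) -> 0 < d ->
  (forall y, (N y < d%:E)%E -> forall f, A f -> absK (f y) <= M) ->
  forall eps, 0 < eps -> exists2 e : R, 0 < e &
    forall y, (N y < e%:E)%E -> unif_seminorm absK A y < eps.
Proof.
move=> N_norm A_lin d_gt0 A_bnd eps eps_gt0.
pose M' := `|M| + 1; have M'_gt0 : 0 < M' by rewrite ltr_pwDr.
have MM' : M <= M' by rewrite (le_trans (ler_norm M)) // lerDl.
pose a := eps / (2 * M'); have a_gt0 : 0 < a by rewrite divr_gt0 ?mulr_gt0.
have [c absKc] := absK_onto (ltW a_gt0).
have c_neq0 : c != 0 by apply: contraTneq a_gt0 => c0; rewrite -absKc c0 absK0 ltxx.
exists (d * a) => [|y Ny]; first by rewrite mulr_gt0.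
have Ny_fin : N y \is a fin_num.
  by rewrite ge0_fin_numE ?enorm_ge0 // (lt_trans Ny) ?ltry.
have Nyc : (N (c^-1 *: y) < d%:E)%E.
  move: Ny; rewrite enormZ // absKV // absKc -(fineK Ny_fin) -EFinM !lte_fin.
  by rewrite ltr_pdivrMl // mulrC.
apply: (@le_lt_trans _ _ (eps / 2)); last by lra.
apply: sup_le_ub => [|_ [f Af <-]]; first by lra.
have := A_bnd _ Nyc f Af; rewrite (lfunZ (A_lin _ Af)) absKM absKV // absKc.
rewrite ler_pdivrMl // => fy.
apply: le_trans fy (le_trans (ler_wpM2l (ltW a_gt0) MM') _).
have -> : a * M' = eps / 2 by rewrite /a; field; rewrite gt_eqF.
by [].
Qed.

End Duality.

Section FinestLocallyConvex.
Variables (X : lmodType K) (N : X -> \bar R) (P : set (X -> R)).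
Hypotheses (N_banach : is_ext_banach absK N) (P_finest : is_finest_lc absK N P).

Lemma mackey_seminorm_small A : mackey_sets absK (lc_open P) A ->
  forall eps, 0 < eps -> exists2 e : R, 0 < e &
    forall y, (N y < e%:E)%E -> unif_seminorm absK A y < eps.
Proof.
case=> A_dual _ A_compact.
have A_lin f : A f -> is_linear_functional f by move=> /A_dual [].
have A_cont f : A f -> exists2 d : R, 0 < d &
    forall w, (N w < d%:E)%E -> absK (f w) < 1.
  by move/A_dual; apply: dual_bounded_near0; case: P_finest.
have A_ptwise x := weak_star_compact_bounded x A_compact.
have [d d_gt0 [M A_bnd]] := uniform_boundedness N_banach A_lin A_cont A_ptwise.
exact: equibounded_unif_seminorm_small N_banach.1 A_lin d_gt0 A_bnd.
Qed.

Lemma mackey_open_sub_finest : mackey_open absK (lc_open P) `<=` lc_open P.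
Proof.
case: (P_finest) => _ _; apply.
- move=> _ [A [A_dual _ A_compact] ->]; apply: unif_seminorm_is_seminorm.
    by move=> f /A_dual [].
  move=> x; have [M AM] := weak_star_compact_bounded x A_compact.
  by exists M => _ [f Af <-]; exact: AM.
- by apply: lc_open_sub_ext_norm_open => _ [A mA ->]; exact: mackey_seminorm_small.
Qed.

Theorem finest_lc_mackey : hahn_banach_property X -> alaoglu_property X ->
  lc_open P = mackey_open absK (lc_open P).
Proof.
move=> hb al; apply/seteqP; split; last exact: mackey_open_sub_finest.
by apply: lc_open_sub_mackey_open hb al; case: P_finest.
Qed.

End FinestLocallyConvex.

End AbsoluteValue.

Section HahnBanach.
Variables (R : realType) (V : lmodType R) (p : V -> R).
Hypothesis p_semi : is_seminorm (fun a : R => `|a|) p.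

Let p_ge0 x : 0 <= p x. Proof. by case: p_semi. Qed.
Let pZ a x : p (a *: x) = `|a| * p x. Proof. by case: p_semi. Qed.
Let pD x y : p (x + y) <= p x + p y. Proof. by case: p_semi. Qed.
Let pZ_pos u z : 0 < u -> u * p (u^-1 *: z) = p z.
Proof.
by move=> u_gt0; rewrite -[u in u * _]gtr0_norm // -pZ scalerA mulfV ?gt_eqF ?scale1r.
Qed.
Let p0 : p 0 = 0. Proof. by rewrite -(scale0r (0 : V)) pZ normr0 mul0r. Qed.

Definition dominated_graph (G : set (V * R)) :=
  [/\ forall x a b, G (x, a) -> G (x, b) -> a = b,
      forall x y a b t, G (x, a) -> G (y, b) -> G (t *: x + y, t * a + b) &
      forall x a, G (x, a) -> a <= p x].

(* Requiring (x0, p x0) only of nonempty graphs lets the empty union of a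
   chain qualify for [Zorn_bigcup]. *)
Definition anchored_graph (x0 : V) (G : set (V * R)) :=
  dominated_graph G /\ (G !=set0 -> G (x0, p x0)).

Lemma anchored_graph_chain x0 (F : set (set (V * R))) :
  F `<=` anchored_graph x0 -> total_on F subset ->
  anchored_graph x0 (\bigcup_(G in F) G).
Proof.
move=> F_anchored F_total; split; first split.
- move=> x a b [G FG Gxa] [G' FG' G'xb].
  have [GG'|G'G] := F_total _ _ FG FG'.
  + by have [[G'_fun _ _] _] := F_anchored _ FG'; apply: G'_fun (GG' _ Gxa) G'xb.
  + by have [[G_fun _ _] _] := F_anchored _ FG; apply: G_fun Gxa (G'G _ G'xb).
- move=> x y a b t [G FG Gxa] [G' FG' G'yb].
  have [GG'|G'G] := F_total _ _ FG FG'.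
  + have [[_ G'_lin _] _] := F_anchored _ FG'.
    by exists G' => //; apply: G'_lin (GG' _ Gxa) G'yb.
  + have [[_ G_lin _] _] := F_anchored _ FG.
    by exists G => //; apply: G_lin Gxa (G'G _ G'yb).
- by move=> x a [G FG Gxa]; have [[_ _ G_le] _] := F_anchored _ FG; apply: G_le Gxa.
- move=> [[x a] [G FG Gxa]]; exists G => //.
  by have [_ G_x0] := F_anchored _ FG; apply: G_x0; exists (x, a).
Qed.

Lemma anchored_graph_line x0 :
  anchored_graph x0 [set (t *: x0, t * p x0) | t in [set: R]].
Proof.
split=> [|_]; last by exists 1; rewrite ?scale1r ?mul1r.
split.
- move=> x a b [t _ [<- <-]] [s _ [ts <-]]; have [->//|t_neq_s] := eqVneq t s.
  have : (t - s) *: x0 == 0 by rewrite scalerBl ts subrr.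
  by rewrite scaler_eq0 subr_eq0 (negbTE t_neq_s) => /eqP ->; rewrite p0 !mulr0.
- move=> x y a b u [t _ [<- <-]] [s _ [<- <-]].
  by exists (u * t + s) => //; rewrite scalerDl scalerA mulrDl mulrA.
- by move=> x a [t _ [<- <-]]; rewrite pZ ler_wpM2r // ler_norm.
Qed.

Lemma extension_constant G x1 : dominated_graph G -> G (0, 0) ->
  exists c, (forall y a, G (y, a) -> a - p (y - x1) <= c) /\
            (forall z b, G (z, b) -> c <= p (z + x1) - b).
Proof.
case=> _ G_lin G_le G0.
have sep y a z b : G (y, a) -> G (z, b) -> a - p (y - x1) <= p (z + x1) - b.
  move=> Gya Gzb; have := G_le _ _ (G_lin _ _ _ _ 1 Gya Gzb).
  have := pD (y - x1) (z + x1); rewrite addrACA addNr addr0 scale1r mul1r; lra.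
pose S := [set ya.2 - p (ya.1 - x1) | ya in G].
exists (sup S); split=> [y a Gya|z b Gzb].
  apply: ub_le_sup; last by exists (y, a).
  by exists (p (0 + x1) - 0) => _ [[y' a'] Gya' <-]; exact: sep Gya' G0.
apply: ge_sup; first by exists (0 - p (0 - x1)), (0, 0).
by move=> _ [[y a] Gya <-]; exact: sep.
Qed.

Section Extension.
Variables (G : set (V * R)) (x1 : V) (c : R).
Hypotheses (G_dom : dominated_graph G) (G0 : G (0, 0)).
Hypothesis c_lb : forall y a, G (y, a) -> a - p (y - x1) <= c.
Hypothesis c_ub : forall z b, G (z, b) -> c <= p (z + x1) - b.

Definition graph_extension : set (V * R) :=
  [set w | exists y a t, G (y, a) /\ w = (y + t *: x1, a + t * c)].

Lemma graph_scale y a u : G (y, a) -> G (u *: y, u * a).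
Proof. by case: G_dom => _ G_lin _ /(G_lin _ _ _ _ u)/(_ G0); rewrite !addr0. Qed.

Lemma graph_extension_dominated y a t : G (y, a) -> a + t * c <= p (y + t *: x1).
Proof.
case: G_dom => _ _ G_le Gya; have [t_gt0|t_le0] := ltP 0 t.
  have := ler_wpM2l (ltW t_gt0) (c_ub (graph_scale t^-1 Gya)).
  have -> : t^-1 *: y + x1 = t^-1 *: (y + t *: x1).
    by rewrite scalerDr scalerA mulVf ?gt_eqF ?scale1r.
  rewrite mulrBr mulrA mulfV ?gt_eqF // mul1r pZ_pos //; lra.
have [t0|t_neq0] := eqVneq t 0; first by rewrite t0 mul0r scale0r !addr0; exact: G_le.
have s_gt0 : 0 < - t by rewrite oppr_gt0 lt_neqAle t_neq0.
have := ler_wpM2l (ltW s_gt0) (c_lb (graph_scale (- t)^-1 Gya)).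
have -> : (- t)^-1 *: y - x1 = (- t)^-1 *: (y + t *: x1).
  by rewrite scalerDr scalerA invrN mulNr mulVf // scaleN1r.
rewrite mulrBr mulrA mulfV ?gt_eqF // mul1r pZ_pos //; lra.
Qed.

Lemma dominated_graph_extension : (forall a, ~ G (x1, a)) ->
  dominated_graph graph_extension.
Proof.
move=> x1_notin; case: (G_dom) => G_fun G_lin _; split.
- move=> x a b [y [a1 [t [Gya1 [-> ->]]]]] [y' [a2 [t' [Gya2 [e ->]]]]].
  have [tt'|t_neq_t'] := eqVneq t t'.
    rewrite -tt' in e *; have yy' : y = y' by apply: (addIr (t *: x1)).
    by rewrite -yy' in Gya2; rewrite (G_fun _ _ _ Gya1 Gya2).
  have tt'_neq0 : t - t' != 0 by rewrite subr_eq0.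
  have : (t - t') *: x1 = - y + y'.
    by rewrite scalerBl; apply: (@addrI _ y); rewrite addrA e addrK addNKr.
  move/(congr1 (fun z => (t - t')^-1 *: z)); rewrite scalerA mulVf // scale1r => x1E.
  case: (x1_notin ((t - t')^-1 * (- a1 + a2))); rewrite {1}x1E.
  by apply: graph_scale; have := G_lin _ _ _ _ (-1) Gya1 Gya2; rewrite scaleN1r mulN1r.
- move=> x y a b s [y1 [a1 [t1 [G1 [-> ->]]]]] [y2 [a2 [t2 [G2 [-> ->]]]]].
  exists (s *: y1 + y2), (s * a1 + a2), (s * t1 + t2); split; first exact: G_lin.
  congr pair; last by ring.
  by rewrite scalerDr scalerA scalerDl addrACA.
- by move=> _ _ [y [a [t [Gya [-> ->]]]]]; exact: graph_extension_dominated.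
Qed.

Lemma graph_extension_sub : G `<=` graph_extension.
Proof. by move=> [y a] Gya; exists y, a, 0; rewrite scale0r mul0r !addr0. Qed.

Lemma graph_extension_x1 : graph_extension (x1, c).
Proof. by exists 0, 0, 1; rewrite scale1r mul1r !add0r. Qed.

End Extension.

Theorem hahn_banach_real x0 : exists2 f, polar (fun a : R => `|a|) p f & f x0 = p x0.
Proof.
have [G [[G_dom G_x0] G_max]] := Zorn_bigcup (@anchored_graph_chain x0).
have Gx0 : G (x0, p x0).
  apply: G_x0; apply/set0P/negP => /eqP G_empty.
  apply: (G_max _ _ (anchored_graph_line x0)); rewrite G_empty; split => // sub.
  by have := sub (x0, p x0); apply; exists 1; rewrite ?scale1r ?mul1r.
case: (G_dom) => G_fun G_lin G_le.
have G0 : G (0, 0).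
  by have := G_lin _ _ _ _ (-1) Gx0 Gx0; rewrite scaleN1r mulN1r !addNr.
have G_total x : exists a, G (x, a).
  apply: contrapT => x_notdom.
  have x_notin a : ~ G (x, a) by move=> Gxa; apply: x_notdom; exists a.
  have [c [c_lb c_ub]] := extension_constant x G_dom G0.
  apply: (G_max (graph_extension G x c)).
    split; first exact: graph_extension_sub.
    by move=> sub; apply: (x_notin c); apply: sub; exact: graph_extension_x1.
  split; first exact: dominated_graph_extension.
  by move=> _; exact: graph_extension_sub Gx0.
have [f Gf] := choice G_total.
have f_lin : is_linear_functional f.
  by move=> t x y; apply: G_fun (Gf _) (G_lin _ _ _ _ t (Gf x) (Gf y)).
exists f; last exact: G_fun (Gf x0) Gx0.
split => // x; rewrite ler_norml G_le ?Gf // andbT.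
have := G_le _ _ (Gf (- x)); rewrite lfunN //.
have -> : p (- x) = p x by rewrite -scaleN1r pZ normrN1 mul1r.
by rewrite lerNl.
Qed.

End HahnBanach.

Lemma hahn_banach_reals (R : realType) (V : lmodType R) :
  hahn_banach_property (fun a : R => `|a|) V.
Proof.
move=> p p_semi x; have [f pf fx] := hahn_banach_real p_semi x.
by exists f; rewrite // fx ler_norm.
Qed.

(* [compact_cover] is stated for pointed spaces. *)
HB.instance Definition _ (R : realType) (W : Type) :=
  Pointed.copy (prod_topology (fun _ : W => R)) (W -> R).

Section WeakStarCompact.
Variable R : realType.
Local Notation PT W := (prod_topology (fun _ : W => R)).

Lemma prod_nbhs_coordinates (W : eqType) (g : PT W) (s : seq W) (d : R) : 0 < d ->
  nbhs g [set h : PT W | forall w, w \in s -> `|h w - g w| < d].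
Proof.
move=> d_gt0; elim: s => [|w s IH].
  apply: (@filterS _ _ _ setT); last exact: filterT.
  by move=> h _ w; rewrite in_nil.
have gw_near : nbhs g [set h : PT W | `|h w - g w| < d].
  have := @proj_continuous W (fun _ => R) w g _ (nbhsx_ballx (g w) d d_gt0).
  rewrite {1}/fmap => gw_ball.
  apply: (@filterS _ _ _ [set h : PT W | ball (g w) d (h w)] _ _ gw_ball) => h.
  by rewrite /= -ball_normE /ball_ /= distrC.
apply: filterS (filterI gw_near IH) => h [hw hs] w'.
by rewrite inE => /orP[/eqP->//|]; exact: hs.
Qed.

Lemma weak_star_compact_image (K : pzRingType) (absK : K -> R) (X : lmodType K)
    (W : eqType) (B : set (PT W)) (Phi : (W -> R) -> X -> K) :
  compact B ->
  (forall g (F : set X) (eps : R), finite_set F -> 0 < eps ->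
     exists s : seq W, exists2 d : R, 0 < d &
       forall h, (forall w, w \in s -> `|h w - g w| < d) ->
         forall x, F x -> absK (Phi h x - Phi g x) < eps) ->
  compact_in (@weak_star_open R K absK X) (Phi @` B).
Proof.
move=> B_compact Phi_cont C C_open C_cover.
have B_cover_compact : cover_compact B by rewrite -compact_cover.
have [||D DC BD] := B_cover_compact _ C (fun V => Phi @^-1` V).
- move=> V CV; rewrite openE => g /= Vg.
  have [F [finF [eps eps_gt0 ballV]]] := C_open V CV _ Vg.
  have [s [d d_gt0 Phi_near]] := Phi_cont g F eps finF eps_gt0.
  apply: filterS (prod_nbhs_coordinates g s d_gt0) => h /= hs.
  by apply: ballV => x Fx; apply: Phi_near.
- by move=> g Bg; have [V CV Vg] := C_cover _ (ex_intro2 _ _ g Bg erefl); exists V.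
exists [set` D]; split; first exact: finite_fset.
- by move=> V /= VD; have := DC V VD; rewrite in_setE.
- by move=> _ [g Bg <-]; have [V VD Vg] := BD g Bg; exists V.
Qed.

End WeakStarCompact.

Section AlaogluReal.
Variables (R : realType) (V : lmodType R).
Local Notation PT := (prod_topology (fun _ : V => R)).

Lemma linear_functionals_closed :
  closed [set g : PT | forall t x y, g (t *: x + y) = t * g x + g y].
Proof.
have coord_cont z : continuous (fun g : PT => g z).
  by move=> g; exact: (@proj_continuous V (fun _ => R) z g).
have -> : [set g : PT | forall t x y, g (t *: x + y) = t * g x + g y] =
    \bigcap_(i in [set: R * V * V])
      ((fun g : PT => g (i.1.1 *: i.1.2 + i.2) - i.1.1 * g i.1.2 - g i.2)
         @^-1` [set 0]).
  apply/seteqP; split=> g /=; first by move=> g_lin [[t x] y] _ /=; rewrite g_lin; ring.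
  move=> g_lin t x y; apply/eqP; rewrite -subr_eq0 opprD addrA.
  by apply/eqP; exact: (g_lin (t, x, y) I).
apply: closed_bigI => -[[t x] y] _; apply: preimage_closed; last exact: closed_eq.
move=> g _; have coord_g z : {for g, continuous (fun h : PT => h z)} := coord_cont z g.
exact: continuousB (continuousB (coord_g _)
  (continuousM (@cst_continuous PT R t g) (coord_g _))) (coord_g _).
Qed.

Variable p : V -> R.

Lemma polar_compact_prod : compact (polar (fun a : R => `|a|) p : set PT).
Proof.
have -> : (polar (fun a : R => `|a|) p : set PT) =
    [set g : PT | forall x, `[- p x, p x] (g x)] `&`
    [set g : PT | forall t x y, g (t *: x + y) = t * g x + g y].
  apply/seteqP; split=> g /=.
    by move=> [g_lin g_le]; split=> // x; rewrite /= in_itv /= -ler_norml.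
  by move=> [g_le g_lin]; split=> // x; have := g_le x; rewrite /= in_itv /= -ler_norml.
apply: compact_closedI; last exact: linear_functionals_closed.
exact: (@tychonoff V (fun _ => R) (fun x => `[- p x, p x])
  (fun x => @segment_compact R (- p x) (p x))).
Qed.

Lemma alaoglu_real : compact_in (@weak_star_open R R (fun a : R => `|a|) V)
  (polar (fun a : R => `|a|) p).
Proof.
rewrite -[polar _ _]image_id; apply: weak_star_compact_image polar_compact_prod _.
move=> g F eps finF eps_gt0; exists (fset_set F : seq V), eps => // h hs x Fx.
by apply: hs; rewrite in_fset_set // in_setE.
Qed.

End AlaogluReal.

Section Realify.
Variables (R : realType) (X : lmodType R[i]).

Definition realify : Type := X.
HB.instance Definition _ := GRing.Zmodule.copy realify X.

Definition realify_scale (r : R) (x : realify) : realify := (r%:C)%C *: (x : X).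

Lemma realify_scaleA a b v :
  realify_scale a (realify_scale b v) = realify_scale (a * b) v.
Proof. by rewrite /realify_scale scalerA -rmorphM. Qed.

Lemma realify_scale1 : left_id 1 realify_scale.
Proof. by move=> v; rewrite /realify_scale rmorph1 scale1r. Qed.

Lemma realify_scaleDr : right_distributive realify_scale +%R.
Proof. by move=> a u v; rewrite /realify_scale scalerDr. Qed.

Lemma realify_scaleDl v : {morph realify_scale^~ v : a b / a + b}.
Proof. by move=> a b; rewrite /realify_scale rmorphD scalerDl. Qed.

HB.instance Definition _ := GRing.Zmodule_isLmodule.Build R realify
  realify_scaleA realify_scale1 realify_scaleDr realify_scaleDl.

End Realify.

Section ComplexScalars.
Variable R : realType.
Local Open Scope complex_scope.

Lemma complex_ext (z w : R[i]) :
  complex.Re z = complex.Re w -> complex.Im z = complex.Im w -> z = w.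
Proof. by case: z w => [a b] [c d] /= -> ->. Qed.

Lemma normC_sqrt (a b : R) : normC (a +i* b) = Num.sqrt (a ^+ 2 + b ^+ 2).
Proof. by []. Qed.

Lemma normC_ge0 (z : R[i]) : 0 <= normC z.
Proof. by case: z => a b; rewrite normC_sqrt sqrtr_ge0. Qed.

Lemma normC_real (a : R) : normC a%:C = `|a|.
Proof. by rewrite /normC /= expr0n /= addr0 sqrtr_sqr. Qed.

Lemma normC_ge_abs (a b : R) : `|a| <= normC (a +i* b).
Proof.
by rewrite normC_sqrt -sqrtr_sqr ler_wsqrtr // lerDl sqr_ge0.
Qed.

Lemma normC_le (a b : R) : normC (a +i* b) <= `|a| + `|b|.
Proof.
rewrite normC_sqrt -[X in _ <= X]ger0_norm ?addr_ge0 // -sqrtr_sqr ler_wsqrtr //.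
have := real_normK (num_real a); have := real_normK (num_real b).
have := normr_ge0 a; have := normr_ge0 b; nra.
Qed.

Lemma normC_onto (r : R) : 0 <= r -> exists c : R[i], normC c = r.
Proof. by exists r%:C; rewrite normC_real ger0_norm. Qed.

Variable X : lmodType R[i].
Local Notation W := (realify X).

Definition complexify (g : W -> R) : X -> R[i] :=
  fun x => g x +i* (- g ('i *: x)).

Lemma Re_lfun_linear (f : X -> R[i]) :
  is_linear_functional f -> is_linear_functional (fun x : W => complex.Re (f x)).
Proof.
move=> f_lin r v w /=; rewrite (f_lin r%:C v w).
by case: (f v) => u1 u2; case: (f w) => w1 w2 /=; ring.
Qed.

Lemma complexify_Re (f : X -> R[i]) : is_linear_functional f ->
  complexify (fun x : W => complex.Re (f x)) = f.
Proof.
move=> f_lin; apply: funext => x; rewrite /complexify (lfunZ f_lin) /=.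
by case: (f x) => u v /=; apply: complex_ext => /=; ring.
Qed.

Section RealFunctional.
Variable g : W -> R.
Hypothesis g_lin : is_linear_functional g.

Lemma complexify_scale (a : R[i]) (x : X) :
  g (a *: x) = complex.Re a * g x + complex.Im a * g ('i *: x).
Proof.
have gZ (r : R) (v : X) : g (r%:C *: v) = r * g v := lfunZ g_lin r v.
have -> : a *: x = (complex.Re a)%:C *: x + (complex.Im a)%:C *: ('i *: x).
  rewrite scalerA -scalerDl; congr (_ *: _); case: a => u v.
  by apply: complex_ext => /=; ring.
by rewrite (lfunD g_lin) !gZ.
Qed.

Lemma complexifyZ a x : complexify g (a *: x) = a * complexify g x.
Proof.
rewrite /complexify scalerA (complexify_scale a) (complexify_scale ('i * a)).
by case: a => u v; apply: complex_ext => /=; ring.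
Qed.

Lemma complexifyD x y : complexify g (x + y) = complexify g x + complexify g y.
Proof.
rewrite /complexify scalerDr !(lfunD g_lin).
by apply: complex_ext => /=; ring.
Qed.

Lemma complexify_linear : is_linear_functional (complexify g).
Proof. by move=> a x y; rewrite complexifyD complexifyZ. Qed.

Variable p : X -> R.
Hypothesis p_semi : is_seminorm (@normC R) p.
Hypothesis g_le : forall x : W, `|g x| <= p x.

Lemma complexify_bound x : normC (complexify g x) <= p x.
Proof.
case: p_semi => p_ge0 pZ _; have := g_le ((g x +i* g ('i *: x)) *: x : X).
rewrite complexify_scale /= (pZ _ x) /complexify !normC_sqrt sqrrN.
set n := Num.sqrt _; have n_ge0 : 0 <= n := sqrtr_ge0 _.
have nK : n ^+ 2 = g x ^+ 2 + g ('i *: x) ^+ 2 by rewrite sqr_sqrtr ?addr_ge0 ?sqr_ge0.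
rewrite -!expr2 -nK ger0_norm ?sqr_ge0 //; have := p_ge0 x; nra.
Qed.

End RealFunctional.

Lemma realify_seminorm (p : X -> R) : is_seminorm (@normC R) p ->
  is_seminorm (fun a : R => `|a|) (p : W -> R).
Proof.
case=> p_ge0 pZ pD; split => // a x.
by rewrite -normC_real; exact: (pZ a%:C x).
Qed.

Lemma polar_complexify (p : X -> R) : is_seminorm (@normC R) p ->
  complexify @` polar (fun a : R => `|a|) (p : W -> R) = polar (@normC R) p.
Proof.
move=> p_semi; apply/seteqP; split.
  move=> _ [g [g_lin g_le] <-].
  by split; [exact: complexify_linear | exact: complexify_bound].
move=> f [f_lin f_le]; exists (fun x : W => complex.Re (f x)); last first.
  exact: complexify_Re.
split; first exact: Re_lfun_linear.
by move=> x; apply: le_trans (f_le x); case: (f x) => u v; exact: normC_ge_abs.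
Qed.

Lemma hahn_banach_complex : hahn_banach_property (@normC R) X.
Proof.
move=> p p_semi x0.
have [g [g_lin g_le] gx0] := hahn_banach_reals (realify_seminorm p_semi) (x0 : W).
exists (complexify g).
  by split; [exact: complexify_linear | exact: complexify_bound].
exact: le_trans gx0 (normC_ge_abs _ _).
Qed.

Lemma alaoglu_complex : alaoglu_property (@normC R) X.
Proof.
move=> p p_semi; rewrite -polar_complexify //.
have := weak_star_compact_image (absK := @normC R) (X := X) (Phi := complexify)
  (@polar_compact_prod R W p).
apply.
move=> g F eps finF eps_gt0.
pose s := fset_set F : seq X.
exists ([seq x : W | x <- s] ++ [seq ('i *: x : W) | x <- s]), (eps / 2).
  by rewrite divr_gt0.
move=> h h_near x Fx; have xs : x \in s by rewrite in_fset_set // in_setE.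
have := h_near x; rewrite mem_cat map_id xs => /(_ isT) hgx.
have := h_near ('i *: x); rewrite mem_cat (map_f (fun x : X => 'i *: x : W) xs) orbT.
move=> /(_ isT) hgix; rewrite /complexify.
have -> : (h x +i* - h ('i *: x)) - (g x +i* - g ('i *: x)) =
    (h x - g x) +i* (- (h ('i *: x) - g ('i *: x))).
  by apply: complex_ext => /=; ring.
by apply: le_lt_trans (normC_le _ _) _; rewrite normrN; lra.
Qed.

End ComplexScalars.

Theorem corollary5p19 (R : realType) :
  (forall (X : lmodType R) (N : X -> \bar R) (P : set (X -> R)),
     is_ext_banach (fun a : R => `|a|) N -> is_finest_lc (fun a : R => `|a|) N P ->
     lc_open P = mackey_open (fun a : R => `|a|) (lc_open P)) /\
  (forall (X : lmodType (complex.complex R)) (N : X -> \bar R)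
          (P : set (X -> R)),
     is_ext_banach (@normC R) N -> is_finest_lc (@normC R) N P ->
     lc_open P = mackey_open (@normC R) (lc_open P)).
Proof.
split=> X N P N_banach P_finest.
- apply: (finest_lc_mackey (@normr_ge0 _ _) (@normr0 _ _) (@normr1 _) (@normrM _)
    (@ler_normD _ _) _ N_banach P_finest).
  + by move=> r r_ge0; exists r; rewrite ger0_norm.
  + exact: hahn_banach_reals.
  + by move=> p _; exact: alaoglu_real.
- apply: (finest_lc_mackey (@normC_ge0 R) (@ComplexField.Normc.normc0 R)
    (@ComplexField.Normc.normc1 R) (@ComplexField.Normc.normcM R) (@le_normcD R)
    (@normC_onto R) N_banach P_finest).
  + exact: hahn_banach_complex.
  + exact: alaoglu_complex.
Qed.
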